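(* Let $R$ be a commutative domain over $\mathbb{C}$, $m\ge1$, and $c(t)\in R[t]$. Consider the endomorphisms of $R(z_1,\dots,z_m)$ $$\sum_{r=1}^m\frac{c(z_r)}{\prod_{1\le s\le m,\,s\ne r}(z_r-z_s)}\,\beta_r \qquad\text{and}\qquad \partial_{m-1}\cdots\partial_1\,c(z_1)\,\beta_1 .$$ Applied to any element of $R(z_1,\dots,z_m)^{\Sigma_m}$ these two operators agree. In particular, both preserve $R[z_1,\dots,z_m]^{\Sigma_m}$.
   Context: $R(z_1,\dots,z_m)$ is the field of fractions of $R[z_1,\dots,z_m]$, with $\Sigma_m$ permuting the variables. For $1\le r\le m$, $\beta_r$ is the $R$-algebra endomorphism with $\beta_r(z_s)=z_s+2\delta_{r,s}$. For $1\le r<m$, $\partial_r=\frac{1}{z_{r+1}-z_r}(s_r-1)$, where $s_r$ is the $R$-algebra automorphism swapping $z_r$ and $z_{r+1}$. Polynomials such as $c(z_1)$ act by multiplication; operators are composed right to left. *)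

From HB Require Import structures.
From mathcomp Require Import all_boot all_order all_algebra all_fingroup.
From mathcomp Require Import algC.
From mathcomp Require Import mpoly.
From mathcomp Require Import generic_quotient fraction.
Set Implicit Arguments. Unset Strict Implicit. Unset Printing Implicit Defensive.
Import Order.TTheory GRing.Theory Num.Theory.
Local Open Scope ring_scope.
Local Open Scope quotient_scope.

Notation "x %:F" := (@FracField.tofrac _ x) : ring_scope.

Section Ops.
Context (R : idomainType) (n : nat).
Local Notation P := {mpoly R[n]}.
Local Notation K := {fraction P}.

(* Extension of a (injective) ring endomorphism f of R[z] to the fraction
   field: x = a/b  |->  f a / f b (computed on the chosen representative). *)
Definition fracmap (f : P -> P) (x : K) : K :=
  let r := repr x in (f \n_r)%:F / (f \d_r)%:F.

Definition zF (i : 'I_n) : K := ('X_i : P)%:F.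

Definition cz (c : {poly R}) (i : 'I_n) : K :=
  ((map_poly (@mpolyC n R) c).['X_i] : P)%:F.

Definition beta_poly (r : 'I_n) (p : P) : P :=
  p \mPo [tuple ('X_i + (if i == r then 2%:R else 0)) | i < n].
Definition beta (r : 'I_n) : K -> K := fracmap (beta_poly r).

Definition permF (s : 'S_n) : K -> K := fracmap (msym s).

Definition ddiff (i j : 'I_n) (x : K) : K :=
  (zF j - zF i)^-1 * (permF (tperm i j) x - x).

Definition frac_symmetric (x : K) : Prop := forall s : 'S_n, permF s x = x.

(* nat index -> ordinal (only used for indices < n) *)
Definition idx (z0 : 'I_n) (k : nat) : 'I_n := insubd z0 k.

Definition op1 (c : {poly R}) (x : K) : K :=
  \sum_(r < n) (cz c r / \prod_(s < n | s != r) (zF r - zF s)) * beta r x.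

(* partial_{n-1} ... partial_1 c(z_1) beta_1  (0-based indices;
   partial_k swaps z_{k-1}, z_k; partial_1 applied first) *)
Definition op2 (z0 : 'I_n) (c : {poly R}) (x : K) : K :=
  foldl (fun y k => ddiff (idx z0 k) (idx z0 k.+1) y)
        (cz c (idx z0 0) * beta (idx z0 0) x) (iota 0 n.-1).

End Ops.

(* Write
     D(S) = sum_(r in S) c(z_r) beta_r x / prod_(s in S, s <> r) (z_r - z_s)
   for the divided difference, over a set S of indices, of the values
   c(z_r) beta_r x at the nodes z_r.  When x is symmetric, a permutation
   sigma maps c(z_r) beta_r x to c(z_(sigma r)) beta_(sigma r) x, hence maps
   D(S) to D(sigma S).  The first operator is D({1..m}), so it commutes with
   Sigma_m.  As s_j D({1..j}) = D({1..j-1, j+1}), the recursion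
     D(A + {a, b}) = (D(A + {b}) - D(A + {a})) / (z_b - z_a)
   gives partial_j D({1..j}) = D({1..j+1}), and the second operator is
   D({1..m}) as well.  Each partial_j preserves polynomials because
   z_(j+1) - z_j divides s_j p - p, so both operators send a symmetric
   polynomial to the same symmetric polynomial. *)

From HB Require Import structures.
From mathcomp Require Import all_boot all_order all_algebra all_fingroup.
From mathcomp Require Import algC mpoly.
From mathcomp Require Import generic_quotient fraction.
From mathcomp Require Import ring zify.
Import Order.TTheory GRing.Theory Num.Theory.
Local Open Scope ring_scope.
Set Implicit Arguments. Unset Strict Implicit. Unset Printing Implicit Defensive.

Section DividedDifference.
Implicit Types (F : fieldType) (I J : eqType).

Definition divdiff F I (z v : I -> F) (s : seq I) : F :=
  \sum_(r <- s) v r / \prod_(k <- s | k != r) (z r - z k).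

Lemma eq_divdiff F I (z z' v v' : I -> F) s :
  z =1 z' -> v =1 v' -> divdiff z v s = divdiff z' v' s.
Proof.
move=> zz' vv'; apply: eq_bigr => r _; rewrite vv'; congr (_ / _).
by apply: eq_bigr => k _; rewrite !zz'.
Qed.

Lemma perm_divdiff F I (z v : I -> F) s t :
  perm_eq s t -> divdiff z v s = divdiff z v t.
Proof.
move=> st; rewrite /divdiff (perm_big _ st); apply: eq_bigr => r _.
by rewrite (perm_big _ st).
Qed.

Lemma divdiff_map F I J (sigma : J -> I) (z v : I -> F) s :
  injective sigma ->
  divdiff z v (map sigma s) = divdiff (z \o sigma) (v \o sigma) s.
Proof.
move=> sigma_inj; rewrite /divdiff big_map; apply: eq_bigr => r _.
by rewrite big_map; under eq_bigl do rewrite (inj_eq sigma_inj).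
Qed.

Lemma rmorph_divdiff F F' I (f : {rmorphism F -> F'}) (z v : I -> F) s :
  f (divdiff z v s) = divdiff (f \o z) (f \o v) s.
Proof.
rewrite /divdiff rmorph_sum; apply: eq_bigr => r _.
by rewrite fmorph_div rmorph_prod; under eq_bigr do rewrite rmorphB.
Qed.

Section Recursion.
Variables (F : fieldType) (I : eqType) (z v : I -> F).
Hypothesis z_inj : injective z.

Lemma subr_nodes_neq0 r k : r != k -> z r - z k != 0.
Proof. by rewrite subr_eq0 (inj_eq z_inj). Qed.

Lemma prod_nodes_neq0 s r : \prod_(k <- s | k != r) (z r - z k) != 0.
Proof.
rewrite prodf_seq_neq0; apply/allP => k _; apply/implyP.
by rewrite eq_sym; apply: subr_nodes_neq0.
Qed.

Lemma divdiff_cons u s : u \notin s ->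
  divdiff z v (u :: s) = v u / \prod_(k <- s | k != u) (z u - z k)
    + \sum_(r <- s) v r / ((z r - z u) * \prod_(k <- s | k != r) (z r - z k)).
Proof.
move=> us; rewrite /divdiff !big_cons eqxx /=; congr (_ + _).
rewrite big_seq_cond [RHS]big_seq_cond; apply: eq_bigr => r /andP[rs _].
by rewrite big_cons ifT //; apply: contraNneq us => ->.
Qed.

Lemma divdiff_cons2 a b s : uniq [:: a, b & s] ->
  divdiff z v [:: a, b & s] =
    (z b - z a)^-1 * (divdiff z v (b :: s) - divdiff z v (a :: s)).
Proof.
rewrite /= inE negb_or => /andP[/andP[ab as_] /andP[bs _]].
set Q := fun r => \prod_(k <- s | k != r) (z r - z k).
have Q_neq0 r : Q r != 0 by exact: prod_nodes_neq0.
rewrite !divdiff_cons ?inE ?negb_or ?ab //.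
rewrite big_cons ifT 1?eq_sym // big_cons.
have -> : \prod_(k <- b :: s | k != b) (z b - z k) = Q b by rewrite big_cons eqxx.
have front : v a / ((z a - z b) * Q a) + v b / ((z b - z a) * Q b)
    = (z b - z a)^-1 * (v b / Q b - v a / Q a).
  have ab' : z a - z b != 0 := subr_nodes_neq0 ab.
  by field; rewrite !Q_neq0 ab' subr_nodes_neq0 // eq_sym.
have back : \sum_(r <- s) v r / ((z r - z a) * \prod_(k <- b :: s | k != r) (z r - z k))
    = (z b - z a)^-1 * (\sum_(r <- s) v r / ((z r - z b) * Q r)
                        - \sum_(r <- s) v r / ((z r - z a) * Q r)).
  rewrite -sumrB mulr_sumr big_seq [RHS]big_seq; apply: eq_bigr => r rs.
  have ra : z r - z a != 0 by apply: subr_nodes_neq0; apply: contraNneq as_ => <-.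
  have rb : z r - z b != 0 by apply: subr_nodes_neq0; apply: contraNneq bs => <-.
  rewrite big_cons ifT; last by apply: contraNneq bs => ->.
  by rewrite -/(Q r); field; rewrite Q_neq0 ra rb subr_nodes_neq0 // eq_sym.
by rewrite -/(Q a) -/(Q b) addrA front back; ring.
Qed.

End Recursion.
End DividedDifference.

Lemma iotaS_rcons m k : iota m k.+1 = rcons (iota m k) (m + k).
Proof. by rewrite -addn1 iotaD cats1. Qed.

Lemma perm_index_enum (T : finType) (s : seq T) :
  uniq s -> (forall x, x \in s) -> perm_eq s (index_enum T).
Proof.
move=> s_uniq s_full; apply: uniq_perm; rewrite ?index_enum_uniq // => x.
by rewrite s_full mem_index_enum.
Qed.

Lemma frac_reprE (T : idomainType) (x : {fraction T}) :
  x = (\n_(repr x))%:F / (\d_(repr x))%:F.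
Proof.
apply/(@mulIf _ (\d_(repr x))%:F); first by rewrite tofrac_eq0 denom_ratioP.
rewrite mulfVK ?tofrac_eq0 ?denom_ratioP // -{1}[x]reprK; unlock tofrac.
rewrite -[_ * _]/(FracField.mul _ _) -FracField.pi_mul.
apply/eqmodP; rewrite /= FracField.equivfE /=.
by rewrite !numden_Ratio ?mulf_neq0 ?oner_neq0 ?denom_ratioP // !mulr1 mulrC.
Qed.

Lemma frac_divP (T : idomainType) (x : {fraction T}) :
  exists a b, b != 0 /\ x = a%:F / b%:F.
Proof.
by exists \n_(repr x), \d_(repr x); split; [exact: denom_ratioP | exact: frac_reprE].
Qed.

Lemma frac_rmorph_eq (T : idomainType) (F : fieldType)
    (f g : {rmorphism {fraction T} -> F}) :
  (forall a, f a%:F = g a%:F) -> f =1 g.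
Proof. by move=> fg x; have [a [b [_ ->]]] := frac_divP x; rewrite !fmorph_div !fg. Qed.

Section FracMap.
Variables (R : idomainType) (n : nat) (f : {rmorphism {mpoly R[n]} -> {mpoly R[n]}}).
Hypothesis f_inj : injective f.

Let f_neq0 b : b != 0 -> f b != 0.
Proof. by rewrite raddf_eq0. Qed.

Lemma fracmap_div a b : b != 0 -> fracmap f (a%:F / b%:F) = (f a)%:F / (f b)%:F.
Proof.
move=> b0; rewrite /fracmap; set r := repr _.
have d0 : \d_r != 0 := denom_ratioP r.
have /eqP := frac_reprE (a%:F / b%:F); rewrite -/r.
rewrite eqr_div ?tofrac_eq0 // -!tofracM tofrac_eq => /eqP e.
apply/eqP; rewrite eqr_div ?tofrac_eq0 ?f_neq0 // -!tofracM tofrac_eq.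
by rewrite -!rmorphM e.
Qed.

Lemma fracmap_tofrac a : fracmap f a%:F = (f a)%:F.
Proof.
by rewrite -[a%:F]divr1 -tofrac1 fracmap_div ?oner_neq0 // rmorph1 tofrac1 divr1.
Qed.

Lemma fracmap_is_zmod_morphism : zmod_morphism (fracmap f).
Proof.
move=> x y; have [a [b [b0 ->]]] := frac_divP x; have [c [d [d0 ->]]] := frac_divP y.
rewrite (fracmap_div a b0) (fracmap_div c d0).
rewrite -!mulNr -!tofracN !addf_div ?tofrac_eq0 ?f_neq0 //.
rewrite -!tofracM -!tofracD fracmap_div ?mulf_neq0 //.
by rewrite rmorphD !rmorphM rmorphN.
Qed.

Lemma fracmap_is_monoid_morphism : monoid_morphism (fracmap f).
Proof.
split; first by rewrite -tofrac1 fracmap_tofrac rmorph1.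
move=> x y; have [a [b [b0 ->]]] := frac_divP x; have [c [d [d0 ->]]] := frac_divP y.
rewrite (fracmap_div a b0) (fracmap_div c d0) !mulf_div -!tofracM.
by rewrite fracmap_div ?mulf_neq0 // !rmorphM.
Qed.

End FracMap.

Lemma mpolyXU_inj (R : nzRingType) (n : nat) :
  injective (fun i : 'I_n => 'X_i : {mpoly R[n]}).
Proof.
move=> i j /(congr1 (mcoeff U_(j))); rewrite /= !mcoeffXU eqxx.
by case: eqP => // _ /eqP; rewrite eq_sym oner_eq0.
Qed.

Lemma msymXU (R : nzRingType) (n : nat) (s : 'S_n) (i : 'I_n) :
  msym s ('X_i : {mpoly R[n]}) = 'X_(s i).
Proof. by rewrite /msym mmapX mmap1U. Qed.

Lemma msymC (R : nzRingType) (n : nat) (s : 'S_n) (c : R) :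
  msym s (c%:MP : {mpoly R[n]}) = c%:MP.
Proof. exact: mmapC. Qed.

Lemma rmorph_mpolyE (R : comRingType) (n k : nat)
    (g : {rmorphism {mpoly R[n]} -> {mpoly R[k]}}) :
  (forall c, g c%:MP = c%:MP) -> forall p, g p = p \mPo [tuple g 'X_i | i < n].
Proof.
move=> gC p; rewrite comp_mpolyEX {1}[p]mpolyE rmorph_sum; apply: eq_bigr => m _.
rewrite -mul_mpolyC rmorphM gC mul_mpolyC comp_mpolyX mpolyXE_id rmorph_prod.
by congr (_ *: _); apply: eq_bigr => i _; rewrite rmorphXn tnth_mktuple.
Qed.

Lemma rmorph_subr_dvd (R : comRingType) (n : nat)
    (g : {rmorphism {mpoly R[n]} -> {mpoly R[n]}}) (d : {mpoly R[n]}) :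
  (forall c, g c%:MP = c%:MP) -> (forall i, exists q, g 'X_i - 'X_i = d * q) ->
  forall p, exists q, g p - p = d * q.
Proof.
move=> gC gX p; pose D u := exists q, g u - u = d * q.
have DC a : D a%:MP by exists 0; rewrite gC subrr mulr0.
have DD u v : D u -> D v -> D (u + v).
  by case=> [qu eu] [qv ev]; exists (qu + qv); rewrite rmorphD opprD addrACA eu ev mulrDr.
have DM u v : D u -> D v -> D (u * v).
  case=> [qu eu] [qv ev]; exists (g u * qv + qu * v).
  by rewrite rmorphM -[g u](subrK u) eu -[g v](subrK v) ev; ring.
have D1 : D 1 by rewrite -mpolyC1.
rewrite [p]mpolyE; apply: (big_ind D); [by rewrite -mpolyC0 | exact: DD | move=> m _].
rewrite -mul_mpolyC mpolyXE_id; apply: (DM _ _ (DC _)).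
apply: (big_ind D); [exact: D1 | exact: DM | move=> i _].
by elim: (m i) => [|k IHk]; rewrite ?expr0 // exprS; exact: DM.
Qed.

Section Actions.
Variables (R : idomainType) (n : nat).
Local Notation P := {mpoly R[n]}.
Local Notation K := {fraction P}.
Implicit Types (p : P) (x : K) (s : 'S_n) (r : 'I_n).

Definition beta_tuple r : n.-tuple P :=
  [tuple ('X_i + (if i == r then 2%:R else 0)) | i < n].

HB.instance Definition _ r :=
  GRing.RMorphism.copy (beta_poly r) (comp_mpoly (beta_tuple r)).

Lemma beta_polyXU r (i : 'I_n) :
  beta_poly r ('X_i : P) = 'X_i + (if i == r then 2%:R else 0).
Proof. by rewrite /beta_poly comp_mpolyXU -tnth_nth tnth_mktuple. Qed.

Lemma beta_poly_inj r : injective (beta_poly (R := R) r).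
Proof.
pose unshift := comp_mpoly [tuple ('X_i - (if i == r then 2%:R else 0) : P) | i < n].
suff unshiftK : cancel (beta_poly r) unshift by exact: can_inj unshiftK.
move=> p; rewrite -[LHS]/((unshift \o beta_poly r) p) rmorph_mpolyE => [|c]; last first.
  by rewrite /= /beta_poly !comp_mpolyC.
rewrite -[RHS]comp_mpoly_id; congr (_ \mPo _); apply: eq_mktuple => i /=.
rewrite beta_polyXU /unshift comp_mpolyD comp_mpolyXU -tnth_nth tnth_mktuple.
by case: (i == r); rewrite ?rmorph_nat ?subrK // comp_mpoly0 subr0 addr0.
Qed.

Lemma msym_beta_poly s r p : msym s (beta_poly r p) = beta_poly (s r) (msym s p).
Proof.
rewrite -[LHS]/((msym s \o beta_poly r) p) rmorph_mpolyE => [|c]; last first.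
  by rewrite /= /beta_poly comp_mpolyC msymC.
rewrite /beta_poly msym_mPo; congr (_ \mPo _); apply: eq_mktuple => i /=.
rewrite beta_polyXU msymD msymXU !tnth_mktuple (inj_eq perm_inj).
by case: (i == r); rewrite ?rmorph_nat ?msym0.
Qed.

HB.instance Definition _ s := GRing.isZmodMorphism.Build K K (permF s)
  (fracmap_is_zmod_morphism (@inj_msym _ _ s)).
HB.instance Definition _ s := GRing.isMonoidMorphism.Build K K (permF s)
  (fracmap_is_monoid_morphism (@inj_msym _ _ s)).
HB.instance Definition _ r := GRing.isZmodMorphism.Build K K (beta r)
  (fracmap_is_zmod_morphism (@beta_poly_inj r)).
HB.instance Definition _ r := GRing.isMonoidMorphism.Build K K (beta r)
  (fracmap_is_monoid_morphism (@beta_poly_inj r)).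

Lemma permF_tofrac s p : permF s p%:F = (msym s p)%:F.
Proof. exact/fracmap_tofrac/inj_msym. Qed.

Lemma beta_tofrac r p : beta r p%:F = (beta_poly r p)%:F.
Proof. exact/fracmap_tofrac/beta_poly_inj. Qed.

Lemma permF_beta s r x : permF s (beta r x) = beta (s r) (permF s x).
Proof.
apply: (frac_rmorph_eq (f := permF s \o beta r) (g := beta (s r) \o permF s)) => a /=.
by rewrite beta_tofrac !permF_tofrac beta_tofrac msym_beta_poly.
Qed.


Lemma frac_symmetric_tofrac p :
  p \is symmetric -> frac_symmetric p%:F.
Proof. by move=> /issymP psym s; rewrite permF_tofrac psym. Qed.

End Actions.

Section Operators.
Variables (R : idomainType) (n : nat) (c : {poly R}).
Local Notation P := {mpoly R[n]}.
Local Notation K := {fraction P}.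
Local Notation z := (@zF R n).
Implicit Types (p : P) (x : K) (s : 'S_n) (r : 'I_n).

Definition cbeta x r : K := cz c r * beta r x.

Lemma zF_inj : injective z.
Proof. by move=> i j /eqP; rewrite tofrac_eq => /eqP /mpolyXU_inj. Qed.

Lemma permF_zF s i : permF s (z i) = z (s i).
Proof. by rewrite permF_tofrac msymXU. Qed.

Lemma permF_cz s i : permF s (cz c i) = cz c (s i).
Proof.
rewrite permF_tofrac -horner_map /= msymXU -map_poly_comp.
by congr (_.[_]%:F); apply: eq_map_poly => a /=; rewrite msymC.
Qed.

Lemma permF_cbeta s x r : frac_symmetric x -> permF s (cbeta x r) = cbeta x (s r).
Proof. by move=> xsym; rewrite /cbeta rmorphM /= permF_cz permF_beta xsym. Qed.

Lemma permF_divdiff s x rs : frac_symmetric x ->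
  permF s (divdiff z (cbeta x) rs) = divdiff z (cbeta x) (map s rs).
Proof.
move=> xsym; rewrite rmorph_divdiff divdiff_map; last exact: perm_inj.
by apply: eq_divdiff => r /=; rewrite (permF_zF, permF_cbeta).
Qed.

Lemma op1E x : op1 c x = divdiff z (cbeta x) (index_enum 'I_n).
Proof. by apply: eq_bigr => r _; rewrite mulrAC. Qed.

Lemma op1_symmetric x : frac_symmetric x -> frac_symmetric (op1 c x).
Proof.
move=> xsym s; rewrite op1E permF_divdiff //; apply: perm_divdiff.
apply: perm_index_enum => [|r].
  by rewrite map_inj_uniq ?index_enum_uniq //; exact: perm_inj.
by rewrite -[r](permKV s) map_f ?mem_index_enum.
Qed.

Section IteratedDivdiff.
Variable z0 : 'I_n.
Local Notation I := (idx z0).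

Lemma val_idx k : (k < n)%N -> val (I k) = k.
Proof. by move=> kn; rewrite val_insubd kn. Qed.

Lemma eq_idx k l : (k < n)%N -> (l < n)%N -> (I k == I l) = (k == l).
Proof. by move=> kn ln; rewrite -val_eqE /= !val_idx. Qed.

Lemma uniq_idx_iota k : (k <= n)%N -> uniq (map I (iota 0 k)).
Proof.
move=> kn; rewrite map_inj_in_uniq ?iota_uniq // => a b /[!mem_iota] ak bk /eqP.
by rewrite eq_idx => [/eqP||]; lia.
Qed.

Variable x : K.
Hypothesis xsym : frac_symmetric x.

Lemma ddiff_divdiff_idx j : (j.+2 <= n)%N ->
  ddiff (I j) (I j.+1) (divdiff z (cbeta x) (map I (iota 0 j.+1)))
    = divdiff z (cbeta x) (map I (iota 0 j.+2)).
Proof.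
move=> jn; set A := map I (iota 0 j).
have iotaS k : map I (iota 0 k.+1) = rcons (map I (iota 0 k)) (I k).
  by rewrite iotaS_rcons map_rcons.
have fixA : map (tperm (I j) (I j.+1)) A = A.
  rewrite map_id_in // => _ /mapP[k /[!mem_iota] /andP[_ kj] ->].
  by apply: tpermD; rewrite eq_idx; lia.
have rcons_perm (y : 'I_n) ys : perm_eq (rcons ys y) (y :: ys) by rewrite perm_rcons.
have swap_perm : perm_eq (map I (iota 0 j.+2)) [:: I j, I j.+1 & A].
  by rewrite !iotaS -!cats1 -catA perm_catC.
rewrite /ddiff permF_divdiff // iotaS map_rcons fixA tpermL.
rewrite (perm_divdiff _ _ swap_perm).
rewrite !(perm_divdiff _ _ (rcons_perm _ _)) divdiff_cons2 //; first exact: zF_inj.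
by rewrite -(perm_uniq swap_perm) uniq_idx_iota.
Qed.

Lemma foldl_ddiff_idx j : (j < n)%N ->
  foldl (fun y k => ddiff (I k) (I k.+1) y) (cbeta x (I 0)) (iota 0 j)
    = divdiff z (cbeta x) (map I (iota 0 j.+1)).
Proof.
elim: j => [|j IHj] jn; first by rewrite /divdiff big_seq1 big_cons eqxx big_nil divr1.
by rewrite iotaS_rcons foldl_rcons IHj ?ddiff_divdiff_idx //; lia.
Qed.

Lemma op1_op2 : (0 < n)%N -> op1 c x = op2 z0 c x.
Proof.
move=> n0; rewrite op1E /op2 foldl_ddiff_idx ?prednK //.
apply/esym/perm_divdiff/perm_index_enum => [|r]; first exact: uniq_idx_iota.
by rewrite -(valKd z0 r) map_f // mem_iota ltn_ord.
Qed.

End IteratedDivdiff.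

Lemma ddiff_tofrac i j p : exists q, ddiff i j p%:F = q%:F.
Proof.
have [<-|ij] := eqVneq i j; first by exists 0; rewrite /ddiff subrr invr0 mul0r tofrac0.
have [|q eq_q] :=
  rmorph_subr_dvd (g := msym (tperm i j)) (d := 'X_j - 'X_i) (msymC _) _ p.
  move=> k; rewrite /= msymXU.
  have [->|ki] := eqVneq k i; first by exists 1; rewrite tpermL mulr1.
  have [->|kj] := eqVneq k j; first by exists (-1); rewrite tpermR mulrN1 opprB.
  by exists 0; rewrite tpermD 1?eq_sym // subrr mulr0.
exists q; rewrite /ddiff permF_tofrac -!tofracB eq_q tofracM mulKf //.
by rewrite tofrac_eq0 subr_eq0 (inj_eq (@mpolyXU_inj _ _)) eq_sym.
Qed.

Lemma op2_tofrac z0 p : exists q, op2 z0 c p%:F = q%:F.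
Proof.
rewrite /op2 -/(cbeta p%:F (idx z0 0)).
have [q0 ->] : exists q, cbeta p%:F (idx z0 0) = q%:F.
  by eexists; rewrite /cbeta beta_tofrac -tofracM.
elim: (iota 0 n.-1) q0 => [|k ks IHks] q0 /=; first by exists q0.
by have [q1 ->] := ddiff_tofrac (idx z0 k) (idx z0 k.+1) q0; apply: IHks.
Qed.

End Operators.

Theorem lemma4p7 (R : idomainType) (phi : {rmorphism algC -> R})
    (m : nat) (hm : (0 < m)%N) (c : {poly R}) :
  (forall x : {fraction {mpoly R[m]}},
      frac_symmetric x -> op1 c x = op2 (Ordinal hm) c x) /\
  (forall p : {mpoly R[m]}, p \is symmetric ->
      (exists q : {mpoly R[m]}, q \is symmetric /\ op1 c (p%:F) = q%:F) /\
      (exists q : {mpoly R[m]}, q \is symmetric /\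
                                op2 (Ordinal hm) c (p%:F) = q%:F)).
Proof.
split=> [x xsym | p /frac_symmetric_tofrac psym]; first exact: op1_op2.
have [q op2q] := op2_tofrac c (Ordinal hm) p.
have op1q : op1 c p%:F = q%:F by rewrite (op1_op2 _ (Ordinal hm)).
suff qsym : q \is symmetric by split; exists q.
apply/issymP => s; apply/eqP; rewrite -tofrac_eq -permF_tofrac -op1q.
by rewrite op1_symmetric.
Qed.
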